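(* Let $q \in Q$ and suppose $R_q$ consists of a single simple path. Then the polytope $\bar{P}(\mathcal{C}_q) = \{ (x,y) \in [0,1]^{|N|+1} : \sum_{j \in S} x_j \ge y \ \forall S \in \mathcal{C}_q\}$ is integral, i.e., all its vertices are integral.
   Context: Let $G=(N,A)$ be a finite undirected graph with edge lengths $\ell_e > 0$, and let $d>0$ be the travel range, with $\ell_e \le d$ for every edge. A path is a sequence $r=(v_0,v_1,\dots,v_m)$, $m\ge 1$, of nodes in which consecutive nodes are joined by an edge (nodes may repeat); $r$ is simple if its nodes are distinct. For $x \in \{0,1\}^N$ ($x_j = 1$ meaning a charging station at node $j$), path $r$ is repeatedly traversable under $x$ if, letting $W=(v_0,\dots,v_m,v_{m-1},\dots,v_0)$ be the round trip along $r$ (same path out and back), at least one node of $r$ has $x_j=1$ and, in the infinite periodic repetition of $W$, the distance travelled between any two consecutive visits to nodes with a station is at most $d$. Let $Q$ be a finite set of demands; each $q\in Q$ has a finite nonempty set $R_q$ of paths. For each $q \in Q$ and $r \in R_q$, $\mathcal{D}_{q,r}\subseteq 2^N$ is a family of node sets such that for every $x \in \{0,1\}^N$: $r$ is repeatedly traversable under $x$ if and only if $\sum_{j\in S} x_j \ge 1$ for all $S \in \mathcal{D}_{q,r}$. Define $\mathcal{C}_q = \{ \bigcup_{r \in R_q} S_r : S_r \in \mathcal{D}_{q,r} \text{ for each } r \in R_q\}$. *)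

From HB Require Import structures.
From mathcomp Require Import all_boot all_order all_algebra.
From mathcomp Require Import reals.
Set Implicit Arguments. Unset Strict Implicit. Unset Printing Implicit Defensive.
Import Order.TTheory GRing.Theory Num.Theory.
Local Open Scope ring_scope.

Section Defs.
Variables (R : realType) (N : finType).

Definition is_path (adj : rel N) (r : seq N) : bool :=
  if r is v0 :: s then (0 < size s)%N && path adj v0 s else false.

(* One period of the round trip (v0,..,vm,v_{m-1},..,v1) (back at v0 closes it). *)
Definition roundtrip (r : seq N) : seq N := r ++ behead (rev (behead r)).

Definition rt_node (r : seq N) (v0 : N) (i : nat) : N :=
  nth v0 (roundtrip r) (i %% size (roundtrip r)).

Definition traversable (ell : N -> N -> R) (d : R) (x : {ffun N -> bool})
    (r : seq N) : Prop :=
  has x r /\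
  forall v0 (i k : nat), (0 < k)%N ->
    x (rt_node r v0 i) -> x (rt_node r v0 (i + k)) ->
    (forall t, (0 < t < k)%N -> ~~ x (rt_node r v0 (i + t))) ->
    \sum_(t < k) ell (rt_node r v0 (i + t)) (rt_node r v0 (i + t).+1) <= d.

Definition Cq (paths : seq (seq N)) (D : seq N -> {set {set N}})
    (S : {set N}) : Prop :=
  exists f : seq N -> {set N},
    (forall r, r \in paths -> f r \in D r) /\ S = \bigcup_(r <- paths) f r.

Definition Pbar (C : {set N} -> Prop) (x : {ffun N -> R}) (y : R) : Prop :=
  (forall j, 0 <= x j <= 1) /\ 0 <= y <= 1 /\
  forall S, C S -> y <= \sum_(j in S) x j.

Definition is_vertex (P : {ffun N -> R} -> R -> Prop) (x : {ffun N -> R}) (y : R)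
  : Prop :=
  P x y /\
  forall (x1 x2 : {ffun N -> R}) (y1 y2 t : R),
    P x1 y1 -> P x2 y2 -> 0 < t < 1 ->
    x = [ffun j => t * x1 j + (1 - t) * x2 j] -> y = t * y1 + (1 - t) * y2 ->
    x1 = x2 /\ y1 = y2.

Definition integral_polytope (P : {ffun N -> R} -> R -> Prop) : Prop :=
  forall x y, is_vertex P x y -> (forall j, x j \is a Num.int) /\ y \is a Num.int.

End Defs.

(* A vertex (x, y) of Pbar(C) has y = 0 or y = 1: for 0 < y < 1 it is the proper convex
   combination y (x+, 1) + (1 - y) (x-, 0) of two points of Pbar(C), where
   x+_j = min(1, x_j / y) and x-_j = max(0, (x_j - y) / (1 - y)).
   For a single simple path r, every S in D_{q,r} contains a window {r_a, ..., r_(b-1)}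
   which in turn contains a member of D_{q,r}: with stations exactly outside S some leg of
   the round trip between consecutive stations is too long; the nodes visited strictly inside
   that leg form a window of r, since the position along r moves by one at each step; and with
   stations exactly outside this window the same leg is still too long.  Hence, once y is an
   integer, Pbar(C_q) is cut out by integer lower bounds on differences z_u - z_w of the
   prefix sums z_k = x_(s_0) + ... + x_(s_(k-1)) along an enumeration s of N starting with r.
   If some z_k were fractional, shifting by +e and by -e every z_u with z_u - z_k integral
   keeps all these bounds for small e > 0, so x would be the midpoint of two other points. *)

From HB Require Import structures.
From mathcomp Require Import all_boot all_order all_algebra.
From mathcomp Require Import reals.
From mathcomp Require Import ring lra zify.
From Stdlib Require Import Classical.
Import Order.TTheory GRing.Theory Num.Theory.
Set Implicit Arguments. Unset Strict Implicit. Unset Printing Implicit Defensive.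
Local Open Scope ring_scope.

Definition zigzag (m p : nat) : nat :=
  let q := (p %% m.*2)%N in if (q <= m)%N then q else (m.*2 - q)%N.

Definition nat_lipschitz (f : nat -> nat) : Prop :=
  forall p, (f p.+1 <= (f p).+1)%N /\ (f p <= (f p.+1).+1)%N.

Lemma zigzag_le m p : (zigzag m p <= m)%N.
Proof. by rewrite /zigzag /=; case: ifP => q_m; lia. Qed.

Lemma zigzag_lipschitz m : nat_lipschitz (zigzag m).
Proof.
move=> p; rewrite /zigzag /=.
case: (posnP m) => [->|m_gt0]; first by rewrite !modn0 /=; case: p.
have q_lt : (p %% m.*2 < m.*2)%N by rewrite ltn_mod double_gt0.
rewrite modnS; case: (boolP (m.*2 %| p.+1)%N) => [dvd_p1|_] /=.
  have -> : (p %% m.*2 = m.*2.-1)%N.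
    have : ((p %% m.*2).+1 %% m.*2 = 0)%N by rewrite -addn1 modnDml addn1; exact/eqP.
    case: (ltngtP (p %% m.*2).+1 m.*2) => [q1_lt|q1_gt|q1_eq];
      [by rewrite modn_small | lia | lia].
  by repeat case: ifP => ?; lia.
by repeat case: ifP => ?; lia.
Qed.

Lemma rt_node_zigzag (N : finType) (r : seq N) v0 p : (1 < size r)%N ->
  rt_node r v0 p = nth v0 r (zigzag (size r).-1 p).
Proof.
move=> r_gt1.
have size_rt : size (roundtrip r) = (size r).-1.*2.
  by rewrite /roundtrip size_cat size_behead size_rev size_behead; lia.
have q_lt : (p %% (size r).-1.*2 < (size r).-1.*2)%N by rewrite ltn_mod; lia.
rewrite /rt_node size_rt /roundtrip /zigzag nth_cat.
case: ifP => [q_le|q_gt]; first by rewrite ifT //; lia.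
rewrite ifF; last lia.
rewrite nth_behead nth_rev size_behead; last lia.
by rewrite nth_behead; congr nth; lia.
Qed.

Section NatLipschitz.
Variable f : nat -> nat.
Hypothesis f_lip : nat_lipschitz f.

Lemma nat_ivt a b c : (a <= b)%N -> (f a <= c <= f b)%N || (f b <= c <= f a)%N ->
  exists2 t, (a <= t <= b)%N & f t = c.
Proof.
elim: b => [|b IH] a_le c_between.
  by exists 0%N; [lia | move: a_le c_between; rewrite leqn0 => /eqP ->; lia].
have [a_eq|a_le_b] : a = b.+1 \/ (a <= b)%N by lia.
  by exists b.+1; [lia | move: c_between; rewrite a_eq; lia].
have := f_lip b.
case: (boolP ((f a <= c <= f b) || (f b <= c <= f a))%N) => [c_ab _|c_nab f_step].
  by have [t t_ab ft] := IH a_le_b c_ab; exists t; [lia | ].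
by exists b.+1; [lia | lia].
Qed.

Lemma lipschitz_image_interval m a b : (forall p, f p <= m)%N ->
  exists lo hi, (lo <= hi <= m.+1)%N /\
    forall c, (exists2 t, (a <= t < b)%N & f t = c) <-> (lo <= c < hi)%N.
Proof.
move=> f_le; case: (leqP b a) => [b_le|a_lt].
  by exists 0%N, 0%N; split=> // c; split=> [[t]|]; lia.
pose P c := c \in [seq f t | t <- index_iota a b].
have PE c : P c <-> exists2 t, (a <= t < b)%N & f t = c.
  rewrite /P; split=> [/mapP[t t_ab ->]|[t t_ab <-]].
    by exists t; rewrite // -mem_index_iota.
  by apply: map_f; rewrite mem_index_iota.
have P_ex : exists c, P c by exists (f a); apply/PE; exists a; lia.
have P_le c : P c -> (c <= m)%N by move/PE=> [t _ <-].
case: (ex_minnP P_ex) => lo /PE[t1 t1_ab ft1] lo_min.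
case: (ex_maxnP P_ex P_le) => hi /PE[t2 t2_ab ft2] hi_max.
have P_hi : P hi by apply/PE; exists t2.
exists lo, hi.+1; split=> [|c]; first by have := lo_min _ P_hi; have := f_le t2; lia.
split=> [/PE Pc|c_in]; first by have := lo_min _ Pc; have := hi_max _ Pc; lia.
have [t1_le|t2_le] := leqP t1 t2.
  have [|t t_ab ft] := nat_ivt (c := c) t1_le; first by rewrite ft1 ft2; lia.
  by exists t; [lia | ].
have [|t t_ab ft] := nat_ivt (c := c) (ltnW t2_le); first by rewrite ft1 ft2; lia.
by exists t; [lia | ].
Qed.

End NatLipschitz.

Section Windows.
Variable N : finType.
Implicit Types (r t : seq N) (C : {set N} -> Prop).

Definition window r (a b : nat) : {set N} := [set j | (a <= index j r < b)%N].

Definition window_sandwich r C : Prop :=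
  forall S, C S -> exists a b, [/\ (a <= b <= size r)%N, window r a b \subset S
                                & exists2 S', C S' & S' \subset window r a b].

Lemma window_cat r t a b : (b <= size r)%N -> window (r ++ t) a b = window r a b.
Proof.
move=> b_le; apply/setP=> j; rewrite !inE index_cat.
case: ifP => // /negbT/memNindex ->.
by rewrite !ltnNge b_le (leq_trans b_le (leq_addr _ _)) !andbF.
Qed.

Lemma window_sandwich_cat r t C : window_sandwich r C -> window_sandwich (r ++ t) C.
Proof.
move=> C_win S /C_win[a [b [ab_le W_S W_C]]]; exists a, b.
by rewrite size_cat window_cat; [split=> //; lia | lia].
Qed.

Lemma window_sandwich_ext r C C' : (forall S, C S <-> C' S) ->
  window_sandwich r C -> window_sandwich r C'.
Proof.
move=> CC' C_win S /CC'/C_win[a [b [ab_le W_S [S' /CC' C'S' S'_W]]]].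
by exists a, b; split=> //; exists S'.
Qed.

Lemma sum_window (R : realType) r v a b (F : N -> R) : uniq r -> (b <= size r)%N ->
  \sum_(j in window r a b) F j = \sum_(a <= c < b) F (nth v r c).
Proof.
move=> r_uniq b_le; rewrite -(big_map (nth v r) xpredT) big_uniq; last first.
  rewrite map_inj_in_uniq ?iota_uniq // => c c'.
  rewrite !mem_index_iota => /andP[_ c_lt] /andP[_ c'_lt] /eqP.
  by rewrite nth_uniq //; [move/eqP | exact: leq_trans b_le | exact: leq_trans b_le].
apply: eq_bigl => j; rewrite inE; apply/idP/mapP => [j_W|[c c_ab ->]].
  have j_r : j \in r by rewrite -index_mem; case/andP: j_W => _ /leq_trans; apply.
  by exists (index j r); rewrite ?nth_index // mem_index_iota.
move: c_ab; rewrite mem_index_iota => /andP[c_ge c_lt].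
by rewrite index_uniq ?c_ge //; exact: leq_trans b_le.
Qed.

End Windows.

Section Traversal.
Variables (R : realType) (N : finType) (ell : N -> N -> R) (d : R).
Implicit Types (r : seq N) (x : {ffun N -> bool}).

Definition stations_outside (A : {set N}) : {ffun N -> bool} := [ffun j => j \notin A].

Definition overlong_leg x r v0 i k : Prop :=
  [/\ (0 < k)%N, x (rt_node r v0 i), x (rt_node r v0 (i + k)),
      forall t, (0 < t < k)%N -> ~~ x (rt_node r v0 (i + t))
    & d < \sum_(t < k) ell (rt_node r v0 (i + t)) (rt_node r v0 (i + t).+1)].

Lemma not_traversableP x r :
  ~ traversable ell d x r <-> ~~ has x r \/ exists v0 i k, overlong_leg x r v0 i k.
Proof.
split=> [not_tr|[no_station|[v0 [i [k [k_gt0 x_i x_ik between long]]]]] [has_x tr]].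
- case/boolP: (has x r) => [has_x|]; [right | by left].
  apply: NNPP => no_leg; apply: not_tr; split=> // v0 i k k_gt0 x_i x_ik between.
  by rewrite leNgt; apply/negP => long; apply: no_leg; exists v0, i, k.
- by rewrite has_x in no_station.
- by have := tr v0 i k k_gt0 x_i x_ik between; rewrite leNgt long.
Qed.

Lemma untraversable_window r S : uniq r -> (1 < size r)%N ->
  ~ traversable ell d (stations_outside S) r ->
  exists a b, [/\ (a <= b <= size r)%N, window r a b \subset S
                & ~ traversable ell d (stations_outside (window r a b)) r].
Proof.
move=> r_uniq r_gt1 /not_traversableP[no_station|[v0 [i [k leg]]]].
  exists 0%N, (size r); split; first by rewrite leqnn.
    apply/subsetP => j; rewrite inE index_mem => j_r.
    by move/hasPn: no_station => /(_ j j_r); rewrite ffunE negbK.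
  apply/not_traversableP; left; apply/hasPn => j j_r.
  by rewrite ffunE negbK inE index_mem j_r.
case: leg => k_gt0 x_i x_ik between long.
set m := (size r).-1.
have step_lip : nat_lipschitz (fun t => zigzag m (i + t)).
  by move=> p; rewrite addnS; exact: zigzag_lipschitz.
have [lo [hi [lohi_le image]]] :=
  lipschitz_image_interval step_lip 1 k (fun t => zigzag_le m (i + t)).
have hi_le : (hi <= size r)%N by case/andP: lohi_le => _; rewrite /m prednK //; lia.
have leg_window t : (0 < t < k)%N -> rt_node r v0 (i + t) \in window r lo hi.
  have z_lt : (zigzag m (i + t) < size r)%N by have := zigzag_le m (i + t); lia.
  by move=> t_k; rewrite rt_node_zigzag // inE index_uniq //; apply/image; exists t.
have window_leg j : j \in window r lo hi ->
    exists2 t, (0 < t < k)%N & rt_node r v0 (i + t) = j.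
  rewrite inE => /andP[lo_le lt_hi].
  have j_r : j \in r by rewrite -index_mem (leq_trans lt_hi).
  have [u u_k zu] := proj2 (image (index j r)) (introT andP (conj lo_le lt_hi)).
  by exists u; rewrite // rt_node_zigzag // zu nth_index.
have window_S : window r lo hi \subset S.
  apply/subsetP => j /window_leg[u u_k <-].
  by have := between u u_k; rewrite ffunE negbK.
have outside_window p : stations_outside S (rt_node r v0 p) ->
    stations_outside (window r lo hi) (rt_node r v0 p).
  by rewrite !ffunE; apply: contra; apply: (subsetP window_S).
exists lo, hi; split=> //; first by rewrite hi_le andbT; case/andP: lohi_le.
apply/not_traversableP; right; exists v0, i, k; split; rewrite ?outside_window //.
by move=> t t_k; rewrite ffunE negbK leg_window.
Qed.

Variables (r : seq N) (Dr : {set {set N}}).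
Hypothesis traversable_hitting : forall x, traversable ell d x r <->
  (forall S, S \in Dr -> (1 <= \sum_(j in S) nat_of_bool (x j))%N).

Lemma hits_outside (S W : {set N}) :
  (1 <= \sum_(j in S) nat_of_bool (stations_outside W j))%N = ~~ (S \subset W).
Proof.
apply/idP/idP => [|/subsetPn[j j_S j_W]]; last by rewrite (bigD1 j) //= ffunE j_W.
apply: contraLR => /negbNE S_W; rewrite -ltnNge ltnS leqn0 sum_nat_eq0.
by apply/forall_inP => j j_S; rewrite ffunE (subsetP S_W j j_S).
Qed.

Lemma untraversable_outsideP W :
  ~ traversable ell d (stations_outside W) r <-> exists2 S, S \in Dr & S \subset W.
Proof.
rewrite traversable_hitting; split=> [not_hit|[S S_D S_W] hit].
  apply: NNPP => no_S; apply: not_hit => S S_D; rewrite hits_outside.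
  by apply/negP => S_W; apply: no_S; exists S.
by have := hit S S_D; rewrite hits_outside S_W.
Qed.

Lemma window_sandwich_hitting : uniq r -> (1 < size r)%N ->
  window_sandwich r (fun S => S \in Dr).
Proof.
move=> r_uniq r_gt1 S S_D.
have /untraversable_window[//|//|a [b [ab_le W_S /untraversable_outsideP W_D]]] :
  ~ traversable ell d (stations_outside S) r.
  by apply/untraversable_outsideP; exists S.
by exists a, b.
Qed.

End Traversal.

Section Polytope.
Variables (R : realType) (N : finType).
Implicit Types (C : {set N} -> Prop) (x : {ffun N -> R}) (y : R).

Lemma ler_sum_subset (A B : {set N}) (F : N -> R) : A \subset B ->
  (forall j, 0 <= F j) -> \sum_(j in A) F j <= \sum_(j in B) F j.
Proof.
move=> A_B F_ge0; rewrite [X in _ <= X](big_setID A) /= (setIidPr A_B).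
by rewrite lerDl sumr_ge0.
Qed.

Lemma vertex_perturb (P : {ffun N -> R} -> R -> Prop) x y (delta : {ffun N -> R}) :
  is_vertex P x y ->
  (forall sg, sg = 1 \/ sg = -1 -> P [ffun j => x j + sg * delta j] y) ->
  forall j, delta j = 0.
Proof.
move=> [_ extreme] P_pm j.
have [|||eq_pm _] :=
  extreme _ _ y y 2^-1 (P_pm 1 (or_introl erefl)) (P_pm (-1) (or_intror erefl)).
- by apply/andP; split; lra.
- by apply/ffunP => i; rewrite !ffunE; field.
- by field.
by have := congr1 (fun f : {ffun N -> R} => f j) eq_pm; rewrite !ffunE; lra.
Qed.

Lemma Pbar_bottom C x : (forall j, 0 <= x j <= 1) -> Pbar C x 0.
Proof.
move=> x_box; split=> //; split=> [|S _]; first by rewrite lexx ler01.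
by apply: sumr_ge0 => j _; case/andP: (x_box j).
Qed.

Lemma Pbar_top C x y : Pbar C x y -> 0 < y ->
  Pbar C [ffun j => if y <= x j then 1 else x j / y] 1.
Proof.
move=> [x_box [_ x_C]] y_gt0.
have top_box j : 0 <= [ffun j => if y <= x j then 1 else x j / y] j <= 1.
  rewrite ffunE; case: ifP => [_|/negbT]; first by rewrite ler01 lexx.
  rewrite -ltNge => x_lt; case/andP: (x_box j) => x_ge0 _.
  by rewrite divr_ge0 ?(ltW y_gt0) //= ler_pdivrMr // mul1r ltW.
split=> //; split=> [|S S_C]; first by rewrite ler01 lexx.
case: (boolP [exists j in S, y <= x j]) => [/exists_inP[j j_S y_le]|/exists_inPn x_lt].
  rewrite (bigD1 j) //= ffunE y_le lerDl sumr_ge0 // => i _.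
  by case/andP: (top_box i).
rewrite (eq_bigr (fun j => x j / y)) => [|j j_S]; last by rewrite ffunE ifN ?x_lt.
by rewrite -mulr_suml ler_pdivlMr // mul1r x_C.
Qed.

Lemma Pbar_vertex_y01 C x y : is_vertex (Pbar C) x y -> y = 0 \/ y = 1.
Proof.
move=> [x_feas extreme]; have [x_box [/andP[y_ge0 y_le1] _]] := x_feas.
case: (eqVneq y 0) => [|y_neq0]; first by left.
case: (eqVneq y 1) => [|y_neq1]; first by right.
have y_gt0 : 0 < y by rewrite lt_neqAle eq_sym y_neq0.
have y_lt1 : y < 1 by rewrite lt_neqAle y_neq1.
have y1_neq0 : 1 - y != 0 by rewrite subr_eq0 eq_sym.
pose bottom := [ffun j => if y <= x j then (x j - y) / (1 - y) else 0].
have bottom_box j : 0 <= bottom j <= 1.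
  rewrite ffunE; case: ifP => [y_le|_]; last by rewrite lexx ler01.
  case/andP: (x_box j) => _ x_le1.
  have y1_gt0 : 0 < 1 - y by rewrite subr_gt0.
  by rewrite divr_ge0 ?subr_ge0 ?(ltW y1_gt0) //= ler_pdivrMr // mul1r lerD2r.
have [|||_ /eqP] := extreme _ _ 1 0 y (Pbar_top x_feas y_gt0)
  (Pbar_bottom C bottom_box).
- by rewrite y_gt0 y_lt1.
- by apply/ffunP => j; rewrite !ffunE; case: ifP => _; field.
- by rewrite mulr1 mulr0 addr0.
by rewrite oner_eq0.
Qed.

Lemma Pbar_window_transfer (s : seq N) C x y x' : window_sandwich s C -> Pbar C x y ->
  (forall j, 0 <= x' j <= 1) ->
  (forall a b, (a <= b <= size s)%N ->
     y <= \sum_(j in window s a b) x j -> y <= \sum_(j in window s a b) x' j) ->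
  Pbar C x' y.
Proof.
move=> C_win [x_box [y_01 x_C]] x'_box windows; split=> //; split=> // S S_C.
have ge0 (z : {ffun N -> R}) : (forall j, 0 <= z j <= 1) -> forall j, 0 <= z j.
  by move=> z_box j; case/andP: (z_box j).
have [a [b [ab_le W_S [S' S'_C S'_W]]]] := C_win S S_C.
apply: (le_trans _ (ler_sum_subset W_S (ge0 x' x'_box))); apply: windows => //.
exact: le_trans (x_C S' S'_C) (ler_sum_subset S'_W (ge0 x x_box)).
Qed.

End Polytope.

Section FracClass.
Variable R : realType.

Definition frac (t : R) : R := t - (Num.floor t)%:~R.

Lemma frac_gt0 t : ~~ (t \is a Num.int) -> 0 < frac t.
Proof.
move=> t_nint; rewrite /frac lt_neqAle subr_ge0 floor_le andbT.
by apply: contraNneq t_nint => /esym/eqP; rewrite subr_eq0 intrEfloor eq_sym.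
Qed.

Lemma intr_le_sub_frac (c : int) t : c%:~R <= t -> c%:~R <= t - frac t.
Proof. by rewrite /frac opprB addrC subrK ler_int floor_ge_int. Qed.

Definition shift_frac_class (z : nat -> R) (k0 : nat) (e : R) (k : nat) : R :=
  z k + e * ((z k - z k0) \is a Num.int)%:R.

Lemma shift_frac_class_int_bounds (z : nat -> R) n k0 :
  exists2 e, 0 < e & forall e' u w (c : int), `|e'| <= e -> (u <= n)%N -> (w <= n)%N ->
    c%:~R <= z u - z w ->
    c%:~R <= shift_frac_class z k0 e' u - shift_frac_class z k0 e' w.
Proof.
pose nonint (p : 'I_n.+1 * 'I_n.+1) := ~~ ((z p.1 - z p.2) \is a Num.int).
exists (\big[Num.min/1]_(p | nonint p) frac (z p.1 - z p.2)).
  by apply: lt_bigmin => // p; apply: frac_gt0.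
move=> e' u w c; rewrite ler_norml => /andP[e'_ge e'_le] u_le w_le c_le.
have e_le : ~~ ((z u - z w) \is a Num.int) ->
    \big[Num.min/1]_(p | nonint p) frac (z p.1 - z p.2) <= frac (z u - z w).
  pose uw := (Ordinal (u_le : (u < n.+1)%N), Ordinal (w_le : (w < n.+1)%N)).
  exact: (bigmin_le_cond _ (j := uw)).
have := intr_le_sub_frac c_le; rewrite /shift_frac_class.
case: (boolP ((z u - z k0) \is a Num.int)) => u_cls;
  case: (boolP ((z w - z k0) \is a Num.int)) => w_cls /=; rewrite ?mulr1n ?mulr0n.
- by lra.
- suff /e_le : ~~ ((z u - z w) \is a Num.int) by lra.
  apply: contra w_cls => uw_int.
  have -> : z w - z k0 = (z u - z k0) - (z u - z w) by ring.
  exact: rpredB.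
- suff /e_le : ~~ ((z u - z w) \is a Num.int) by lra.
  apply: contra u_cls => uw_int.
  have -> : z u - z k0 = (z w - z k0) + (z u - z w) by ring.
  exact: rpredD.
- by lra.
Qed.

End FracClass.

Section WindowPolytope.
Variables (R : realType) (N : finType) (s : seq N) (C : {set N} -> Prop).
Hypotheses (s_uniq : uniq s) (s_full : forall j, j \in s) (C_win : window_sandwich s C).
Implicit Types (x : {ffun N -> R}) (v : N).

Definition prefix_sum x v (k : nat) : R := \sum_(0 <= c < k) x (nth v s c).

Lemma prefix_sumS x v c : prefix_sum x v c.+1 - prefix_sum x v c = x (nth v s c).
Proof. by rewrite /prefix_sum big_nat_recr //= addrC addrK. Qed.

Lemma sum_window_prefix x v a b : (a <= b <= size s)%N ->
  \sum_(j in window s a b) x j = prefix_sum x v b - prefix_sum x v a.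
Proof.
case/andP=> a_le b_le; rewrite (sum_window v) // /prefix_sum.
by rewrite (big_cat_nat (leq0n a) a_le) /= addrC addrK.
Qed.

Lemma Pbar_prefix_transfer x x' v (Y : int) : Pbar C x Y%:~R ->
  (forall u w (c : int), (u <= size s)%N -> (w <= size s)%N ->
     c%:~R <= prefix_sum x v u - prefix_sum x v w ->
     c%:~R <= prefix_sum x' v u - prefix_sum x' v w) ->
  Pbar C x' Y%:~R.
Proof.
move=> x_feas bounds; apply: (Pbar_window_transfer C_win x_feas) => [j|a b ab_le].
  have i_lt : (index j s < size s)%N by rewrite index_mem.
  set i := index j s; set z := prefix_sum x v; set z' := prefix_sum x' v.
  have /andP[x_ge0 x_le1] := x_feas.1 (nth v s i).
  rewrite -(nth_index v (s_full j)) -/i -!prefix_sumS -/z -/z' in x_ge0 x_le1 *.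
  have lb := bounds i.+1 i 0 i_lt (ltnW i_lt); rewrite mulr0z in lb.
  have ub := bounds i i.+1 (-1) (ltnW i_lt) i_lt; rewrite mulrN1z -/z -/z' in ub.
  apply/andP; split; first exact: lb.
  suff: -1 <= z' i - z' i.+1 by lra.
  by apply: ub; lra.
rewrite !(sum_window_prefix _ v) //; apply: bounds; case/andP: ab_le => // a_le b_le.
exact: leq_trans b_le.
Qed.

Lemma vertex_prefix_sum_int x y v k0 : is_vertex (Pbar C) x y -> (k0 <= size s)%N ->
  prefix_sum x v k0 \is a Num.int.
Proof.
move=> vtx k0_le; apply: contraT => z_k0_nint; set z := prefix_sum x v.
have [e e_gt0 int_bounds] := shift_frac_class_int_bounds z (size s) k0.
pose cls k : R := ((z k - z k0) \is a Num.int)%:R.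
have cls0 : cls 0%N = 0.
  by rewrite /cls /z /prefix_sum big_geq // sub0r rpredN (negbTE z_k0_nint).
pose delta := [ffun j => e * (cls (index j s).+1 - cls (index j s))].
pose xs sg := [ffun j => x j + sg * delta j].
have xs_prefix sg k : (k <= size s)%N ->
    prefix_sum (xs sg) v k = shift_frac_class z k0 (sg * e) k.
  move=> k_le; rewrite /prefix_sum; under eq_bigr do rewrite ffunE.
  have delta_sum : \sum_(0 <= c < k) delta (nth v s c) = e * cls k.
    rewrite (eq_big_nat _ _ (F2 := fun c => e * (cls c.+1 - cls c))) => [|c /andP[_ c_lt]].
      by rewrite -mulr_sumr telescope_sumr // cls0 subr0.
    by rewrite ffunE index_uniq //; exact: leq_trans k_le.
  by rewrite big_split /= -mulr_sumr delta_sum mulrA.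
have [Y y_eq] : exists Y : int, y = Y%:~R.
  by case: (Pbar_vertex_y01 vtx) => ->; [exists 0 | exists 1].
subst y.
have xs_feasible sg : sg = 1 \/ sg = -1 -> Pbar C (xs sg) Y%:~R.
  move=> sg_pm; apply: (Pbar_prefix_transfer (v := v) vtx.1) => u w c u_le w_le.
  rewrite !xs_prefix //; apply: int_bounds => //.
  by case: sg_pm => ->; rewrite ?mul1r ?mulN1r ?normrN gtr0_norm.
have delta0 := vertex_perturb vtx xs_feasible.
have := xs_prefix 1 k0 k0_le; rewrite /shift_frac_class subrr rpred0 mul1r mulr1n.
rewrite /prefix_sum; under eq_bigr do rewrite ffunE delta0 mulr0 addr0.
by rewrite -/(prefix_sum x v k0) -/z; move: e_gt0; lra.
Qed.

Theorem Pbar_window_integral : integral_polytope (Pbar (R := R) C).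
Proof.
move=> x y vtx; split; last by case: (Pbar_vertex_y01 vtx) => ->; rewrite ?rpred0 ?rpred1.
move=> j; have i_lt : (index j s < size s)%N by rewrite index_mem.
rewrite -(nth_index j (s_full j)) -prefix_sumS.
by apply: rpredB; apply: (vertex_prefix_sum_int _ vtx); rewrite // ltnW.
Qed.

End WindowPolytope.

Lemma Cq_seq1 (N : finType) (r : seq N) (D : seq N -> {set {set N}}) S :
  Cq [:: r] D S <-> S \in D r.
Proof.
split=> [[f [f_D ->]]|S_D]; first by rewrite big_seq1 f_D ?mem_head.
by exists (fun=> S); rewrite big_seq1; split=> // r'; rewrite mem_seq1 => /eqP ->.
Qed.

Theorem proposition2 (R : realType) (N : finType) (adj : rel N)
  (ell : N -> N -> R) (d : R) (Q : Type) (Rq : Q -> seq (seq N))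
  (D : Q -> seq N -> {set {set N}}) :
  symmetric adj ->
  (forall u v, ell u v = ell v u) ->
  (forall u v, adj u v -> 0 < ell u v /\ ell u v <= d) ->
  0 < d ->
  (forall q, Rq q != [::] /\
             forall r, r \in Rq q -> is_path adj r) ->
  (forall q r, r \in Rq q -> forall x : {ffun N -> bool},
     traversable ell d x r <->
     (forall S, S \in D q r -> (1 <= \sum_(j in S) nat_of_bool (x j))%N)) ->
  forall (q : Q) (r : seq N), Rq q = [:: r] -> uniq r ->
  @integral_polytope R N (@Pbar R N (Cq (Rq q) (D q))).
Proof.
move=> _ _ _ _ Rq_paths traversal q r Rq_r r_uniq.
have r_in : r \in Rq q by rewrite Rq_r mem_head.
have r_gt1 : (1 < size r)%N.
  by move: ((Rq_paths q).2 r r_in); case: (r) => [|v0 [|v1 r']].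
pose rest := [seq j <- enum N | j \notin r].
apply: (@Pbar_window_integral _ _ (r ++ rest)).
- rewrite cat_uniq r_uniq filter_uniq ?enum_uniq // andbT.
  by apply/hasPn => j; rewrite mem_filter => /andP[].
- by move=> j; rewrite mem_cat mem_filter mem_enum andbT orbN.
rewrite Rq_r; apply/window_sandwich_cat.
apply: (window_sandwich_ext (fun S => iff_sym (Cq_seq1 _ _ S))).
exact: (window_sandwich_hitting (traversal q r r_in)).
Qed.
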